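(* Let $g\in\mathbb{R}^n$ be a unit vector and $H$ a symmetric positive definite $n\times n$ matrix. Set $s=-Hg$, $g_+=\frac{s}{\|s\|}$, $y=g_+-g$, $V=I-\frac{sy^T}{s^Ty}$, $H_+=VHV^T+\frac{ss^T}{s^Ty}$. Then $$\det H_+\le\tfrac12\det H\quad\text{and}\quad \lambda_{\max}(H_+)\le\lambda_{\max}(H).$$
   Context: $\lambda_{\max}(H)$ denotes the largest eigenvalue of a symmetric matrix $H$; $\|\cdot\|$ is the Euclidean norm. *)

From HB Require Import structures.
From mathcomp Require Import all_boot all_order all_algebra.
From mathcomp Require Import boolp classical_sets reals.
Set Implicit Arguments. Unset Strict Implicit. Unset Printing Implicit Defensive.
Import Order.TTheory GRing.Theory Num.Theory.
Local Open Scope ring_scope.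

Definition dotv {R : ringType} {n : nat} (u v : 'cV[R]_n) : R := (u^T *m v) 0 0.
Definition vnorm {R : rcfType} {n : nat} (v : 'cV[R]_n) : R := Num.sqrt (dotv v v).

Definition symmetricmx {R : ringType} {n : nat} (A : 'M[R]_n) : Prop := A^T = A.
Definition posdefmx {R : numDomainType} {n : nat} (A : 'M[R]_n) : Prop :=
  symmetricmx A /\ forall x : 'cV[R]_n, x != 0 -> 0 < dotv x (A *m x).

(* largest (real) eigenvalue: supremum of the (finite) set of eigenvalues;
   for a symmetric matrix this is the maximum eigenvalue *)
Definition lambda_max {R : realType} {n : nat} (A : 'M[R]_n) : R :=
  sup [set a : R | eigenvalue A a].

(* Write a = g^T H g, sigma = |s| and rho = s^T y; then rho = sigma + a, and
   a <= sigma by Cauchy-Schwarz.  Since V s = 0 and s = H (-g), the update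
   factors as H_+ = F H F^T with F = V - theta s g^T and theta^2 a rho = 1;
   F is a rank-one perturbation of the identity with det F = theta a, so
   det H_+ = (a / rho) det H <= det H / 2.
   For the eigenvalue, let mu be the largest eigenvalue of H, obtained as the
   supremum of its Rayleigh quotients.  Splitting x = w + c y with w = V^T x
   orthogonal to s, the quadratic form of H_+ at x is w^T H w + rho c^2; the
   Rayleigh bound of H at w - c g together with sigma <= mu then gives
   x^T H_+ x <= mu |x|^2, so no eigenvalue of H_+ exceeds mu. *)

From HB Require Import structures.
From mathcomp Require Import all_boot all_order all_algebra.
From mathcomp Require Import boolp classical_sets reals.
From mathcomp Require Import ring lra polyrcf.
Set Implicit Arguments. Unset Strict Implicit. Unset Printing Implicit Defensive.
Import Order.TTheory GRing.Theory Num.Theory.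
Local Open Scope ring_scope.

Section DotProduct.
Variables (R : comNzRingType) (n : nat).
Implicit Types (u v w : 'cV[R]_n) (A : 'M[R]_n).

Lemma dotvE u v : dotv u v = \sum_i u i 0 * v i 0.
Proof. by rewrite /dotv mxE; apply: eq_bigr => i _; rewrite mxE. Qed.

Lemma dotvC u v : dotv u v = dotv v u.
Proof. by rewrite !dotvE; apply: eq_bigr => i _; rewrite mulrC. Qed.

Lemma dotvDl u w v : dotv (u + w) v = dotv u v + dotv w v.
Proof. by rewrite !dotvE -big_split; apply: eq_bigr => i _; rewrite mxE mulrDl. Qed.

Lemma dotvZl a u v : dotv (a *: u) v = a * dotv u v.
Proof. by rewrite !dotvE mulr_sumr; apply: eq_bigr => i _; rewrite mxE mulrA. Qed.

Lemma dotvNl u v : dotv (- u) v = - dotv u v.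
Proof. by rewrite -scaleN1r dotvZl mulN1r. Qed.

Lemma dotvBl u w v : dotv (u - w) v = dotv u v - dotv w v.
Proof. by rewrite dotvDl dotvNl. Qed.

Lemma dotv0l v : dotv 0 v = 0.
Proof. by rewrite -(scale0r 0) dotvZl mul0r. Qed.

Lemma dotvDr u w v : dotv v (u + w) = dotv v u + dotv v w.
Proof. by rewrite dotvC dotvDl !(dotvC v). Qed.

Lemma dotvZr a u v : dotv v (a *: u) = a * dotv v u.
Proof. by rewrite dotvC dotvZl dotvC. Qed.

Lemma dotvNr u v : dotv v (- u) = - dotv v u.
Proof. by rewrite dotvC dotvNl dotvC. Qed.

Lemma dotvBr u w v : dotv v (u - w) = dotv v u - dotv v w.
Proof. by rewrite dotvDr dotvNr. Qed.

Lemma dotv0r v : dotv v 0 = 0.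
Proof. by rewrite dotvC dotv0l. Qed.

Lemma dotv_trmx A u v : dotv u (A *m v) = dotv (A^T *m u) v.
Proof. by rewrite /dotv trmx_mul trmxK mulmxA. Qed.

Lemma dotv_symmetricmx A u v : A^T = A -> dotv u (A *m v) = dotv v (A *m u).
Proof. by move=> A_sym; rewrite dotv_trmx A_sym dotvC. Qed.

Lemma mulmx_outer u v w : u *m v^T *m w = dotv v w *: u.
Proof. by rewrite -mulmxA [v^T *m w]mx11_scalar mul_mx_scalar. Qed.

Lemma det_one_add_outer u v : \det (1%:M + u *m v^T) = 1 + dotv v u.
Proof.
pose P := block_mx (1%:M : 'M[R]_n) (- u) v^T (1%:M : 'M[R]_1).
have P_lu : P = block_mx 1%:M 0 v^T 1%:M *m block_mx 1%:M (- u) 0 (1%:M + v^T *m u).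
  by rewrite mulmx_block /P !mul1mx !mul0mx !addr0 mulmx1 mulmxN [1%:M + _]addrC addKr.
have P_ul : P = block_mx (1%:M + u *m v^T) (- u) 0 1%:M *m block_mx 1%:M 0 v^T 1%:M.
  by rewrite mulmx_block /P !mul1mx !mul0mx !mulmx0 !add0r !mulmx1 mulNmx addrK.
have := congr1 determinant P_ul; rewrite {1}P_lu !det_mulmx !det_lblock !det_ublock.
rewrite !det1 !mul1r !mulr1 => <-.
by rewrite det_mx11 [X in _ = _ + X]mxE !mxE eqxx.
Qed.

End DotProduct.

Definition psdmx {R : numDomainType} {n : nat} (A : 'M[R]_n) : Prop :=
  A^T = A /\ forall x : 'cV[R]_n, 0 <= dotv x (A *m x).

Definition rayleigh_bound {R : numDomainType} {n : nat} (A : 'M[R]_n) (mu : R) : Prop :=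
  forall x : 'cV[R]_n, dotv x (A *m x) <= mu * dotv x x.

Section RealInnerProduct.
Variables (R : realFieldType) (n : nat).
Implicit Types (x u v : 'cV[R]_n) (A : 'M[R]_n).

Lemma dotv_ge0 x : 0 <= dotv x x.
Proof. by rewrite dotvE sumr_ge0 // => i _; rewrite -expr2 sqr_ge0. Qed.

Lemma dotv_eq0 x : (dotv x x == 0) = (x == 0).
Proof.
apply/eqP/eqP => [|->]; last exact: dotv0r.
rewrite dotvE => /psumr_eq0P x0; apply/matrixP => i j.
rewrite (ord1 j) mxE; apply/eqP; rewrite -sqrf_eq0 expr2 x0 //.
by move=> k _; rewrite -expr2 sqr_ge0.
Qed.

Lemma dotv_gt0 x : (0 < dotv x x) = (x != 0).
Proof. by rewrite lt_def dotv_ge0 dotv_eq0 andbT. Qed.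

Lemma sqr_coord_le_dotv x i : x i 0 ^+ 2 <= dotv x x.
Proof.
rewrite dotvE (bigD1 i) //= -expr2 lerDl sumr_ge0 // => k _.
by rewrite -expr2 sqr_ge0.
Qed.

Lemma rayleigh_bound_sum_abs A : rayleigh_bound A (\sum_i \sum_j `|A i j|).
Proof.
move=> x; rewrite dotvE mulr_suml; apply: ler_sum => i _.
rewrite mxE mulr_sumr mulr_suml; apply: ler_sum => j _.
rewrite mulrA mulrAC.
have xi := sqr_coord_le_dotv x i; have xj := sqr_coord_le_dotv x j.
have xixj : `|x i 0| * `|x j 0| <= dotv x x.
  rewrite -real_normK ?num_real // in xi; rewrite -real_normK ?num_real // in xj.
  have := sqr_ge0 (`|x i 0| - `|x j 0|); nra.
apply: le_trans (ler_norm _) _; rewrite !normrM mulrC ler_wpM2l //.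
Qed.

Lemma posdefmx_psdmx A : posdefmx A -> psdmx A.
Proof.
case=> A_sym A_pos; split=> // x.
by have [->|/A_pos/ltW//] := eqVneq x 0; rewrite mulmx0 dotv0r.
Qed.

Lemma psdmx_cauchy_schwarz A u v : psdmx A ->
  dotv u (A *m v) ^+ 2 <= dotv u (A *m u) * dotv v (A *m v).
Proof.
case=> A_sym A_psd.
set a := dotv u (A *m u); set b := dotv u (A *m v); set c := dotv v (A *m v).
have quad t : 0 <= a + 2 * t * b + t ^+ 2 * c.
  suff -> : a + 2 * t * b + t ^+ 2 * c = dotv (u + t *: v) (A *m (u + t *: v)) by [].
  rewrite mulmxDr -scalemxAr dotvDl !dotvDr !dotvZl !dotvZr (dotv_symmetricmx v u A_sym).
  rewrite -/a -/b -/c; ring.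
have [c_gt0|c_le0] := ltrP 0 c.
  have := quad (- b / c).
  have -> : a + 2 * (- b / c) * b + (- b / c) ^+ 2 * c = a - b ^+ 2 / c.
    by field; rewrite gt_eqF.
  by rewrite subr_ge0 ler_pdivrMr.
have c0 : c = 0 by apply/le_anti; rewrite c_le0 A_psd.
rewrite c0 mulr0; have [->|b_neq0] := eqVneq b 0; first by rewrite expr0n.
have := quad (- (a + 1) / (2 * b)).
rewrite c0 mulr0 addr0 (_ : _ + _ = -1) ?ler0N1 //.
by field; rewrite b_neq0.
Qed.

End RealInnerProduct.

Section RayleighBound.
Variables (R : realFieldType) (n : nat).
Implicit Types (x : 'cV[R]_n) (A M : 'M[R]_n).

Lemma rayleigh_bound_psdmx A mu : A^T = A -> rayleigh_bound A mu -> psdmx (mu%:M - A).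
Proof.
move=> A_sym A_mu; split; first by rewrite linearB /= tr_scalar_mx A_sym.
by move=> x; rewrite mulmxBl mul_scalar_mx dotvBr dotvZr subr_ge0.
Qed.

Lemma eigenvalue_rayleigh_quotient A b : eigenvalue A b ->
  exists2 x, x != 0 & dotv x (A *m x) = b * dotv x x.
Proof.
move=> /eigenvalueP [v vA v_neq0]; exists v^T.
  by rewrite -(inj_eq (@trmx_inj _ _ _)) trmxK linear0.
by rewrite dotv_trmx -trmx_mul vA linearZ /= dotvZl.
Qed.

Lemma eigenvalue_le_rayleigh_bound A mu b : rayleigh_bound A mu -> eigenvalue A b -> b <= mu.
Proof.
move=> A_mu /eigenvalue_rayleigh_quotient [x x_neq0 xAx].
by have := A_mu x; rewrite xAx ler_pM2r // dotv_gt0.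
Qed.

Lemma psdmx_unitmx_coercive M : psdmx M -> M \in unitmx ->
  exists K, forall x, dotv x x <= K * dotv x (M *m x).
Proof.
move=> M_psd M_unit; have [M_sym M_ge0] := M_psd.
pose N := invmx M; exists (\sum_i \sum_j `|N i j|) => x.
have K_ge0 : 0 <= \sum_i \sum_j `|N i j| by do 2!apply: sumr_ge0 => ? _.
have [x_neq0|] := boolP (x != 0); last first.
  by rewrite negbK => /eqP->; rewrite dotv0r mulmx0 dotv0r mulr0.
have := psdmx_cauchy_schwarz (N *m x) x M_psd.
rewrite dotv_trmx M_sym mulmxA mulmxV // mul1mx [dotv (N *m x) x]dotvC.
have := rayleigh_bound_sum_abs N x.
have := dotv_gt0 x; rewrite x_neq0 => x_gt0.
have := M_ge0 x; nra.
Qed.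

End RayleighBound.

Section LambdaMax.
Variables (R : realType) (n : nat).
Implicit Types (x : 'cV[R]_n) (A : 'M[R]_n).
Local Open Scope classical_set_scope.

Lemma exists_eigenvalue_rayleigh_bound A x0 : A^T = A -> x0 != 0 ->
  exists2 mu, eigenvalue A mu & rayleigh_bound A mu.
Proof.
move=> A_sym x0_neq0.
pose S := [set dotv x (A *m x) / dotv x x | x in [set x | x != 0]].
have S_sup : has_sup S.
  split; first by exists (dotv x0 (A *m x0) / dotv x0 x0); exists x0.
  exists (\sum_i \sum_j `|A i j|) => _ [x x_neq0 <-].
  by rewrite ler_pdivrMr ?dotv_gt0 // rayleigh_bound_sum_abs.
have A_mu : rayleigh_bound A (sup S).
  move=> x; have [->|x_neq0] := eqVneq x 0; first by rewrite mulmx0 !dotv0r mulr0.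
  by rewrite -ler_pdivrMr ?dotv_gt0 //; apply: sup_upper_bound => //; exists x.
set mu := sup S in A_mu *; exists mu => //; apply/eigenvalueP.
have M_psd := rayleigh_bound_psdmx A_sym A_mu.
suff /det0P [v v_neq0 vM] : \det (mu%:M - A) == 0.
  by exists v => //; move/eqP: vM; rewrite mulmxBr mul_mx_scalar subr_eq0 => /eqP <-.
(* If [mu%:M - A] were invertible, its coercivity constant [K] would keep
   every Rayleigh quotient [1/K] below [mu]. *)
apply: contraT => det_neq0.
have M_unit : mu%:M - A \in unitmx by rewrite unitmxE unitfE.
have [K K_coercive] := psdmx_unitmx_coercive M_psd M_unit.
have K_gt0 : 0 < K.
  have := K_coercive x0; have := dotv_gt0 x0; rewrite x0_neq0.
  have := M_psd.2 x0; nra.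
have : mu <= mu - K^-1.
  apply: ge_sup; first by case: S_sup.
  move=> _ [x x_neq0 <-]; have x_gt0 : 0 < dotv x x by rewrite dotv_gt0.
  have := K_coercive x; rewrite mulmxBl mul_scalar_mx dotvBr dotvZr.
  rewrite ler_pdivrMr // mulrBl => x_coercive.
  by rewrite -(ler_pM2l K_gt0) mulrBr mulVKf ?gt_eqF //; nra.
have : 0 < K^-1 by rewrite invr_gt0.
lra.
Qed.

Lemma rayleigh_bound_lambda_max A x0 : A^T = A -> x0 != 0 ->
  rayleigh_bound A (lambda_max A).
Proof.
move=> A_sym x0_neq0.
have [mu mu_eig A_mu] := exists_eigenvalue_rayleigh_bound A_sym x0_neq0.
have mu_le : mu <= lambda_max A.
  apply: sup_upper_bound => //; split; first by exists mu.
  by exists mu => b /(eigenvalue_le_rayleigh_bound A_mu).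
by move=> x; apply: le_trans (A_mu x) _; rewrite ler_wpM2r ?dotv_ge0.
Qed.

(* The sign condition is needed because [sup set0 = 0]: a matrix without real
   eigenvalues has [lambda_max = 0]. *)
Lemma lambda_max_le A mu : rayleigh_bound A mu -> 0 <= mu -> lambda_max A <= mu.
Proof.
move=> A_mu mu_ge0; rewrite /lambda_max.
have [[b b_eig]|no_eig] := pselect (exists b, eigenvalue A b).
  by apply: ge_sup => [|c /(eigenvalue_le_rayleigh_bound A_mu)]; first by exists b.
suff -> : [set b | eigenvalue A b] = set0 by rewrite sup0.
by apply/seteqP; split => // b b_eig; apply: no_eig; exists b.
Qed.

End LambdaMax.

Section BFGSUpdate.
Variables (R : fieldType) (n : nat).
Implicit Types (s y u x : 'cV[R]_n) (H : 'M[R]_n).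

Definition bfgs_proj s y : 'M[R]_n := 1%:M - (dotv s y)^-1 *: (s *m y^T).

Definition bfgs_update H s y : 'M[R]_n :=
  bfgs_proj s y *m H *m (bfgs_proj s y)^T + (dotv s y)^-1 *: (s *m s^T).

Lemma bfgs_projE s y x : bfgs_proj s y *m x = x - (dotv y x / dotv s y) *: s.
Proof. by rewrite mulmxBl mul1mx -scalemxAl mulmx_outer scalerA mulrC. Qed.

Lemma trmx_bfgs_projE s y x :
  (bfgs_proj s y)^T *m x = x - (dotv s x / dotv s y) *: y.
Proof.
rewrite linearB /= tr_scalar_mx linearZ /= trmx_mul trmxK.
by rewrite mulmxBl mul1mx -scalemxAl mulmx_outer scalerA mulrC.
Qed.

Lemma bfgs_proj_annihilates s y : dotv s y != 0 -> bfgs_proj s y *m s = 0.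
Proof. by move=> rho_neq0; rewrite bfgs_projE dotvC divff // scale1r subrr. Qed.

Lemma dotv_trmx_bfgs_proj s y x : dotv s y != 0 ->
  dotv s ((bfgs_proj s y)^T *m x) = 0.
Proof.
by move=> rho_neq0; rewrite trmx_bfgs_projE dotvBr dotvZr divfK // subrr.
Qed.

Lemma dotv_bfgs_update H s y x :
  dotv x (bfgs_update H s y *m x) =
  dotv ((bfgs_proj s y)^T *m x) (H *m ((bfgs_proj s y)^T *m x)) + dotv s x ^+ 2 / dotv s y.
Proof.
rewrite /bfgs_update mulmxDl -!mulmxA dotvDr dotv_trmx.
by rewrite -scalemxAl mulmx_outer !dotvZr [dotv x s]dotvC mulrC expr2.
Qed.

(* The cross terms vanish because [bfgs_proj s y] kills [s = H u]. *)
Lemma bfgs_update_factor H s y u t :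
  H^T = H -> H *m u = s -> dotv s y != 0 -> t ^+ 2 * dotv s u = (dotv s y)^-1 ->
  let F := bfgs_proj s y + t *: (s *m u^T) in
  bfgs_update H s y = F *m H *m F^T.
Proof.
move=> H_sym Hu rho_neq0 t2 F; rewrite /F /bfgs_update; set V := bfgs_proj s y.
have Vs : V *m s = 0 by apply: bfgs_proj_annihilates.
have uH : u^T *m H = s^T by rewrite -Hu trmx_mul H_sym.
clearbody V.
have VHu : V *m H *m (u *m s^T) = 0 by rewrite mulmxA -(mulmxA V) Hu Vs !mul0mx.
have sVT : s *m s^T *m V^T = 0 by rewrite -mulmxA -trmx_mul Vs trmx0 mulmx0.
have ss : s *m s^T *m (u *m s^T) = dotv s u *: (s *m s^T).
  by rewrite mulmxA mulmx_outer -scalemxAl.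
rewrite [(V + _)^T]linearD /= [(t *: _)^T]linearZ /= trmx_mul trmxK.
rewrite mulmxDl -scalemxAl -[s *m u^T *m H]mulmxA uH !mulmxDr !mulmxDl.
rewrite -!scalemxAl -!scalemxAr VHu sVT ss.
by rewrite scaler0 !addr0 add0r !scalerA -expr2 t2.
Qed.

End BFGSUpdate.

Section Determinants.
Variables (R : rcfType) (n : nat).
Implicit Types (s y u : 'cV[R]_n) (A H : 'M[R]_n).

(* [char_poly A] is monic of degree [n] without roots in [(-oo, 0]], so its
   value [(-1)^n * \det A] at [0] has the sign [(-1)^n] it has at [-oo]. *)
Lemma det_posdefmx_gt0 A : posdefmx A -> 0 < \det A.
Proof.
case=> _ A_pos.
have no_root : {in `]-oo, 0], forall r : R, ~~ root (char_poly A) r}.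
  move=> r; rewrite in_itv /= => r_le0; rewrite -eigenvalue_root_char.
  apply/negP => /eigenvalue_rayleigh_quotient [x x_neq0 xAx].
  by have := A_pos x x_neq0; rewrite xAx pmulr_lgt0 ?dotv_gt0 // ltNge r_le0.
have := @sgp_minftyP R 0 _ no_root 0; rewrite in_itv /= lexx => /(_ isT).
rewrite /sgp_minfty horner_coef0 char_poly_det size_char_poly /=.
rewrite (monicP (char_poly_monic A)) mulr1 sgrM => sg_det.
have sg_sign_neq0 : Num.sg ((-1) ^+ n : R) != 0 by rewrite sgr_eq0 signr_eq0.
suff : Num.sg (\det A) = 1 by move/eqP; rewrite sgr_cp0.
by apply: (mulfI sg_sign_neq0); rewrite sg_det mulr1.
Qed.

Lemma det_bfgs_update H s y u : H^T = H -> H *m u = s -> 0 < dotv s u * dotv s y ->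
  \det (bfgs_update H s y) = dotv s u / dotv s y * \det H.
Proof.
move=> H_sym Hu prod_gt0; set a := dotv s u in prod_gt0 *; set rho := dotv s y in prod_gt0 *.
have a_neq0 : a != 0 by apply: contraTneq prod_gt0 => ->; rewrite mul0r ltxx.
have rho_neq0 : rho != 0 by apply: contraTneq prod_gt0 => ->; rewrite mulr0 ltxx.
pose t := (Num.sqrt (a * rho))^-1.
have t2 : t ^+ 2 * a = rho^-1.
  by rewrite exprVn sqr_sqrtr ?ltW // invfM mulrAC mulVf // mul1r.
rewrite (bfgs_update_factor H_sym Hu rho_neq0 t2) /= !det_mulmx det_tr.
have -> : bfgs_proj s y + t *: (s *m u^T) = 1%:M + s *m (t *: u - rho^-1 *: y)^T.
  rewrite /bfgs_proj [(_ - _)^T]linearB /= mulmxBr !linearZ /= -/rho.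
  by rewrite addrAC -addrA.
rewrite det_one_add_outer dotvBl !dotvZl [dotv u s]dotvC [dotv y s]dotvC -/a -/rho.
rewrite mulVf // addrCA subrr addr0 -t2; ring.
Qed.

End Determinants.

Section NormalizedStep.
Variables (R : rcfType) (n : nat) (g : 'cV[R]_n) (H : 'M[R]_n).
Hypotheses (g_unit : dotv g g = 1) (H_pd : posdefmx H).

Let s := - (H *m g).
Let sig := vnorm s.
Let y := sig^-1 *: s - g.
Let a := dotv g (H *m g).

Let H_sym : H^T = H. Proof. by case: H_pd. Qed.

Let a_gt0 : 0 < a.
Proof. by apply: H_pd.2; rewrite -dotv_gt0 g_unit ltr01. Qed.

Let dotv_s_g : dotv s g = - a.
Proof. by rewrite dotvNl dotvC. Qed.

Let sig_sqr : sig ^+ 2 = dotv s s.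
Proof. exact/sqr_sqrtr/dotv_ge0. Qed.

Let sig_gt0 : 0 < sig.
Proof.
rewrite sqrtr_gt0 dotv_gt0; apply: contraTneq a_gt0 => s0.
by rewrite -oppr_lt0 -dotv_s_g s0 dotv0l ltxx.
Qed.

Let dotv_s_y : dotv s y = sig + a.
Proof. by rewrite dotvBr dotvZr -sig_sqr dotv_s_g expr2 mulKf ?gt_eqF // opprK. Qed.

Let a_le_sig : a <= sig.
Proof.
have one_psd : psdmx (1%:M : 'M[R]_n).
  by split=> [|x]; rewrite ?tr_scalar_mx // mul1mx dotv_ge0.
have := psdmx_cauchy_schwarz g s one_psd; rewrite !mul1mx g_unit mul1r.
rewrite dotvC dotv_s_g sqrrN -sig_sqr => a2_le.
by have := a_gt0; have := sig_gt0; nra.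
Qed.

Lemma det_normalized_step : \det (bfgs_update H s y) <= 2^-1 * \det H.
Proof.
have Hg : H *m (- g) = s by rewrite mulmxN.
have a_rho_gt0 : 0 < dotv s (- g) * dotv s y.
  by rewrite dotvNr dotv_s_g opprK dotv_s_y mulr_gt0 ?addr_gt0.
rewrite (det_bfgs_update H_sym Hg a_rho_gt0) dotvNr dotv_s_g opprK dotv_s_y.
rewrite ler_pM2r ?det_posdefmx_gt0 // ler_pdivrMr ?addr_gt0 //.
by have := a_le_sig; lra.
Qed.

Variable mu : R.
Hypothesis H_mu : rayleigh_bound H mu.

Let a_le_mu : a <= mu.
Proof. by have := H_mu g; rewrite g_unit mulr1. Qed.

Let sig_le_mu : sig <= mu.
Proof.
have sHs := H_mu s; rewrite -sig_sqr in sHs.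
have := psdmx_cauchy_schwarz s g (posdefmx_psdmx H_pd).
rewrite -/a -[H *m g]opprK dotvNr -/s sqrrN -sig_sqr => cs.
have sig2_le : sig ^+ 2 <= mu * a.
  rewrite -(ler_pM2l (exprn_gt0 2 sig_gt0)) -expr2; apply: le_trans cs _.
  by have := a_gt0; nra.
by have := a_le_mu; have := a_gt0; have := sig_gt0; nra.
Qed.

Let mu_dotv_y_ge : sig + mu <= mu * dotv y y.
Proof.
have -> : dotv y y = 2 + 2 * a / sig.
  rewrite dotvBl !dotvBr !dotvZl !dotvZr dotv_s_g [dotv g s]dotvC dotv_s_g g_unit -sig_sqr.
  by field; rewrite gt_eqF.
have := sig_le_mu; have := a_le_mu; have := a_gt0; have := sig_gt0.
have : 0 <= a / sig by rewrite divr_ge0 ?ltW.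
nra.
Qed.

Lemma rayleigh_bound_normalized_step : rayleigh_bound (bfgs_update H s y) mu.
Proof.
move=> x; rewrite dotv_bfgs_update dotv_s_y.
have rho_neq0 : dotv s y != 0 by rewrite dotv_s_y gt_eqF ?addr_gt0.
set w := _ *m x; set c := dotv s x / (sig + a); set t := dotv g w.
have x_def : x = w + c *: y by rewrite /w trmx_bfgs_projE dotv_s_y subrK.
have sw : dotv s w = 0 by apply: dotv_trmx_bfgs_proj.
have yw : dotv y w = - t by rewrite dotvBl dotvZl sw mulr0 sub0r.
have gHw : dotv g (H *m w) = 0.
  by rewrite (dotv_symmetricmx _ _ H_sym) -[H *m g]opprK dotvNr dotvC sw oppr0.
have := H_mu (w - c *: g).
rewrite mulmxBr -scalemxAr !dotvBl !dotvBr !dotvZl !dotvZr gHw -/a -/t.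
rewrite [dotv w g]dotvC -/t [dotv w (H *m g)](dotv_symmetricmx _ _ H_sym) gHw g_unit.
move=> H_w_cg.
have -> : dotv s x ^+ 2 / (sig + a) = c ^+ 2 * (sig + a).
  by rewrite /c; field; rewrite gt_eqF ?addr_gt0.
rewrite [in X in _ <= mu * X]x_def dotvDl !dotvDr !dotvZl !dotvZr [dotv w y]dotvC yw.
have := ler_wpM2l (sqr_ge0 c) mu_dotv_y_ge.
nra.
Qed.

End NormalizedStep.

Theorem mainTheorem7 (R : realType) (n : nat) (g : 'cV[R]_n) (H : 'M[R]_n) :
  vnorm g = 1 -> posdefmx H ->
  let s := - (H *m g) in
  let gp := (vnorm s)^-1 *: s in
  let y := gp - g in
  let V := 1%:M - (dotv s y)^-1 *: (s *m y^T) in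
  let Hp := V *m H *m V^T + (dotv s y)^-1 *: (s *m s^T) in
  \det Hp <= 2^-1 * \det H /\ lambda_max Hp <= lambda_max H.
Proof.
move=> g_norm1 H_pd s gp y V Hp.
have g_unit : dotv g g = 1.
  by rewrite -[dotv g g]sqr_sqrtr ?dotv_ge0 // -/(vnorm g) g_norm1 expr1n.
have g_neq0 : g != 0 by rewrite -dotv_gt0 g_unit ltr01.
split; first exact: det_normalized_step.
have H_lambda := rayleigh_bound_lambda_max H_pd.1 g_neq0.
apply: lambda_max_le; first exact: rayleigh_bound_normalized_step.
have := H_lambda g; rewrite g_unit mulr1; apply: le_trans.
by apply/ltW/H_pd.2.
Qed.
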